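(* Let $X\in\mathbb{R}^{d\times n}$, $\rho>0$, and let $(\beta_k)_{k\ge0}$ be positive numbers with $\sum_k \frac{\beta_{k+1}}{\beta_k^2}<\infty$ and $\sum_k\frac{1}{\beta_k}<\infty$. Let $F(Z)=\log\det(I+Z^TZ)$ for $Z\in\mathbb{R}^{n\times n}$ and $$L(Z,W,Y,\beta)=F(Z)+\rho\|X-XW\|_F^2+\frac{\beta}{2}\|Z-W\|_F^2+\mathrm{Tr}(Y^T(Z-W)).$$ Let $Z_0\in\mathbb{R}^{n\times n}$, $Y_0=0$, and for $k\ge 0$ define $W_{k+1}=(\beta_k I+2\rho X^TX)^{-1}(2\rho X^TX+Y_k+\beta_k Z_k)$ (the minimizer of $W\mapsto L(Z_k,W,Y_k,\beta_k)$), let $Z_{k+1}$ be a global minimizer of $Z\mapsto L(Z,W_{k+1},Y_k,\beta_k)$, and set $Y_{k+1}=Y_k+\beta_k(Z_{k+1}-W_{k+1})$. Then the sequences $\{W_k\}$ and $\{Z_k\}$ are bounded.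
   Context: $I$ is the $n\times n$ identity matrix, $\|\cdot\|_F$ the Frobenius norm, $\mathrm{Tr}$ the trace. *)

From HB Require Import structures.
From Stdlib Require Import Reals Lra ClassicalEpsilon FunctionalExtensionality.
From mathcomp Require Import all_boot all_algebra.
Set Implicit Arguments. Unset Strict Implicit. Unset Printing Implicit Defensive.

Definition Req_bool (x y : R) : bool := if Req_EM_T x y then true else false.

Lemma Req_boolP : Equality.axiom Req_bool.
Proof. move=> x y; rewrite /Req_bool; case: Req_EM_T => h; by constructor. Qed.

HB.instance Definition _ := hasDecEq.Build R Req_boolP.

Definition R_find (P : pred R) (n : nat) : option R :=
  match excluded_middle_informative (exists x, P x) with
  | left h => Some (proj1_sig (constructive_indefinite_description _ h))
  | right _ => None
  end.

Lemma R_find_some (P : pred R) n x : R_find P n = Some x -> P x.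
Proof.
rewrite /R_find; case: excluded_middle_informative => // h [<-].
exact: proj2_sig (constructive_indefinite_description _ h).
Qed.

Lemma R_find_ex (P : pred R) : (exists x, P x) -> exists n, R_find P n.
Proof.
move=> h; exists 0%N; rewrite /R_find; case: excluded_middle_informative => //.
Qed.

Lemma R_find_ext (P Q : pred R) : P =1 Q -> R_find P =1 R_find Q.
Proof. move=> h; have -> : P = Q by apply: functional_extensionality. by []. Qed.

HB.instance Definition _ := hasChoice.Build R R_find_some R_find_ex R_find_ext.

Lemma R_addA : associative Rplus. Proof. move=> *; rewrite Rplus_assoc //. Qed.
Lemma R_addC : commutative Rplus. Proof. move=> *; exact: Rplus_comm. Qed.
Lemma R_add0 : left_id R0 Rplus. Proof. move=> *; exact: Rplus_0_l. Qed.
Lemma R_addN : left_inverse R0 Ropp Rplus. Proof. move=> *; exact: Rplus_opp_l. Qed.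

HB.instance Definition _ := GRing.isZmodule.Build R R_addA R_addC R_add0 R_addN.

Lemma R_mulA : associative Rmult. Proof. move=> *; rewrite Rmult_assoc //. Qed.
Lemma R_mulC : commutative Rmult. Proof. move=> *; exact: Rmult_comm. Qed.
Lemma R_mul1 : left_id R1 Rmult. Proof. move=> *; exact: Rmult_1_l. Qed.
Lemma R_mulDl : left_distributive Rmult Rplus.
Proof. move=> *; exact: Rmult_plus_distr_r. Qed.
Lemma R_one_neq0 : R1 != R0 :> R.
Proof. apply/eqP; exact: R1_neq_R0. Qed.

HB.instance Definition _ :=
  GRing.Zmodule_isComNzRing.Build R R_mulA R_mulC R_mul1 R_mulDl R_one_neq0.

Lemma R_mulVf (x : R) : x != 0%R -> (Rinv x * x)%R = 1%R.
Proof. move/eqP=> h; exact: Rinv_l. Qed.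
Lemma R_inv0 : Rinv 0%R = 0%R.
Proof. exact: Rinv_0. Qed.

HB.instance Definition _ := GRing.ComNzRing_isField.Build R R_mulVf R_inv0.

Local Open Scope ring_scope.

Definition frob_sq (m n : nat) (A : 'M[R]_(m, n)) : R :=
  \sum_(i < m) \sum_(j < n) A i j ^+ 2.

Definition Fld (n : nat) (Z : 'M[R]_n) : R :=
  ln (\det (1%:M + Z^T *m Z)).

Definition Lag (d n : nat) (X : 'M[R]_(d, n)) (rho : R)
  (Z W Y : 'M[R]_n) (beta : R) : R :=
  Fld Z + rho * frob_sq (X - X *m W) + beta / 2%:R * frob_sq (Z - W)
  + \tr (Y^T *m (Z - W)).

(* det(I + Z^T Z) is the Gram determinant of the stacked matrix [I; Z], so by
   Cauchy-Binet it is, up to the factor n!, the sum of the squared n x n minors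
   of [I; Z]. Keeping two of these minors shows that F(Z) controls every entry
   of Z: n! det(I + Z^T Z) >= 1 + Z_ij^2. Adding t E_ij to Z is a row operation
   on [I; Z], which multiplies the sum of squared minors by at most (1 + |t|)^2;
   hence F(Z + t E_ij) <= F(Z) + 2|t| + t^2. Testing the minimality of Z_{k+1}
   against Z_{k+1} + t E_ij then shows that every entry of
   Y_{k+1} = Y_k + beta_k (Z_{k+1} - W_{k+1}) lies in [-2, 2], so the residual
   Z_{k+1} - W_{k+1} is O(1/beta_k) entrywise. Consequently each iteration
   raises the augmented Lagrangian by at most 8 n^2 (beta_{k+1}/beta_k^2 + 1/beta_k),
   a summable amount, while the Lagrangian is at least F(Z_k) - 2 n^2/beta_k.
   So F(Z_k), hence Z_k, is bounded, and so is W_k = Z_k - (Z_k - W_k). *)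

From Stdlib Require Import Reals Lra.
From mathcomp Require Import all_boot all_algebra fingroup perm.
Set Implicit Arguments. Unset Strict Implicit. Unset Printing Implicit Defensive.
Local Open Scope ring_scope.
Delimit Scope R_scope with Re.
Import GRing.Theory.

Lemma addRE (x y : R) : x + y = Rplus x y. Proof. by []. Qed.
Lemma oppRE (x : R) : - x = Ropp x. Proof. by []. Qed.
Lemma mulRE (x y : R) : x * y = Rmult x y. Proof. by []. Qed.
Lemma invRE (x : R) : x^-1 = Rinv x. Proof. by []. Qed.
Lemma zeroRE : 0 = IZR 0. Proof. by []. Qed.
Lemma oneRE : 1 = IZR 1. Proof. by []. Qed.
Lemma sqrRE (x : R) : x ^+ 2 = Rmult x x. Proof. by rewrite expr2. Qed.

Lemma natmulRE (x : R) k : x *+ k = Rmult x (INR k).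
Proof.
elim: k => [|k IH]; first by rewrite mulr0n /= Rmult_0_r.
by rewrite mulrS IH S_INR addRE Rmult_plus_distr_l Rmult_1_r Rplus_comm.
Qed.

Lemma natRE k : k%:R = INR k :> R.
Proof. by rewrite natmulRE Rmult_1_l. Qed.

Lemma twoRE : 2 = IZR 2 :> R.
Proof. by rewrite natRE /=; lra. Qed.

(* The ring operations of [R] are definitionally the Stdlib ones, but [lra],
   [nra], [ring] and [field] only recognize the latter: [rnorm] rewrites the
   former into the latter, and [Rring]/[Rfield] also restate the equation at
   type [R] itself rather than at a structure projection. *)
Ltac rnorm :=
  rewrite ?twoRE ?mulr1n ?(addRE, oppRE, mulRE, invRE, zeroRE, oneRE, sqrRE, natmulRE);
  unfold Rdiv.
Ltac Rring :=
  rnorm; match goal with |- ?a = ?b => change (@eq R a b) end; ring.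
Ltac Rfield :=
  rnorm; match goal with |- ?a = ?b => change (@eq R a b) end; field.

Lemma leR_addr (x y : R) : (0 <= y -> x <= x + y)%Re. Proof. lra. Qed.

Lemma sqrR_ge0 (x : R) : (0 <= x ^+ 2)%Re. Proof. by rnorm; nra. Qed.

Lemma ln_le (x y : R) : (0 < x -> x <= y -> ln x <= ln y)%Re.
Proof. by move=> x_gt0 [lt_xy | ->]; [left; apply: ln_increasing | right]. Qed.

Lemma exp_le (x y : R) : (x <= y -> exp x <= exp y)%Re.
Proof. by move=> [lt_xy | ->]; [left; apply: exp_increasing | right]. Qed.

Lemma sumR_ge0 (I : Type) (r : seq I) (P : pred I) (F : I -> R) :
  (forall i, P i -> 0 <= F i)%Re -> (0 <= \sum_(i <- r | P i) F i)%Re.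
Proof.
move=> F_ge0; apply: (big_ind (Rle 0)) => //; first by rnorm; lra.
by move=> x y; rnorm; lra.
Qed.

Section FinRealSums.
Variables (I : finType) (F G : I -> R).

Lemma leR_sum (P : pred I) :
  (forall i, P i -> F i <= G i)%Re ->
  (\sum_(i | P i) F i <= \sum_(i | P i) G i)%Re.
Proof.
move=> leFG; apply: (big_ind2 Rle) => //; first by rnorm; lra.
by move=> x1 x2 y1 y2; rnorm; lra.
Qed.

Hypothesis F_ge0 : forall i, (0 <= F i)%Re.

Lemma leR_sum_pred (P : pred I) : (\sum_(i | P i) F i <= \sum_i F i)%Re.
Proof.
rewrite [X in (_ <= X)%Re](bigID P) /=.
by apply: leR_addr; apply: sumR_ge0.
Qed.

Lemma leR_term_sum i0 : (F i0 <= \sum_i F i)%Re.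
Proof.
rewrite (bigD1 i0) //=.
by apply: leR_addr; apply: sumR_ge0.
Qed.

Lemma leR_pair_sum i0 i1 : i1 != i0 -> (F i0 + F i1 <= \sum_i F i)%Re.
Proof.
move=> ne10; rewrite (bigD1 i0) //= (bigD1 i1) //= addrA.
by apply: leR_addr; apply: sumR_ge0.
Qed.

End FinRealSums.

Lemma sumR_const (n : nat) (c : R) : \sum_(i < n) c = (c * INR n)%Re.
Proof. by rewrite sumr_const card_ord natmulRE. Qed.

Section ScalarBounds.
Local Open Scope R_scope.

Lemma sqr_add_scaled_le (a b t : R) :
  (a + t * b) ^+ 2 <= (1 + Rabs t) * a ^+ 2 + (Rabs t + t * t) * b ^+ 2.
Proof.
rnorm; have := Rle_0_sqr (a - b); have := Rle_0_sqr (a + b); rewrite /Rsqr.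
by case: (Rle_or_lt 0 t) => t0; [rewrite Rabs_right | rewrite Rabs_left]; nra.
Qed.

(* The function of [t] below vanishes at 0 with one-sided slopes y + 2 and
   y - 2 there, so its nonnegativity forces -2 <= y <= 2. *)
Lemma abs_le2_of_min_at0 (y b : R) : 0 < b ->
  (forall t, 0 <= 2 * Rabs t + t * t + t * y + b / 2 * (t * t)) -> Rabs y <= 2.
Proof.
move=> b_gt0 min0; apply: Rnot_lt_le => y_gt2.
have b2_gt0 : 0 < b + 2 by lra.
set s := (Rabs y - 2) / (b + 2).
have s_gt0 : 0 < s by apply: Rdiv_lt_0_compat; lra.
have s_eq : s * (b + 2) = Rabs y - 2 by rewrite /s; field; lra.
case: (Rle_or_lt 0 y) => [y_ge0 | y_lt0].
- have := min0 (- s); rewrite Rabs_Ropp Rabs_right; last lra.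
  rewrite Rabs_right in s_eq; [nra | lra].
- have := min0 s; rewrite Rabs_right; last lra.
  rewrite Rabs_left in s_eq; [nra | lra].
Qed.

Lemma quadratic_ge_min (b y z : R) : 0 < b -> Rabs y <= 2 ->
  - (2 / b) <= b / 2 * (z * z) + y * z.
Proof.
move=> b_gt0 y_le2.
have y2_le4 : y * y <= 4 by have := Rabs_pos y; have := pow2_abs y; nra.
have sq := Rle_0_sqr (b * z + y); rewrite /Rsqr in sq.
have -> : b / 2 * (z * z) + y * z = ((b * z + y) * (b * z + y) - y * y) / (2 * b).
  by field; lra.
have -> : - (2 / b) = (0 - 4) / (2 * b) by field; lra.
by apply: Rmult_le_compat_r; [left; apply: Rinv_0_lt_compat | ]; lra.
Qed.

End ScalarBounds.

Section Series.
Variables (f : nat -> R) (l : R).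
Hypotheses (f_ge0 : forall k, (0 <= f k)%Re) (f_sum : infinite_sum f l).

Lemma sum_f_R0E k : sum_f_R0 f k = \sum_(0 <= i < k.+1) f i.
Proof.
elim: k => [|k IH]; first by rewrite big_nat1.
by rewrite big_nat_recr //= -IH.
Qed.

Lemma infinite_sum_partial_le k : (\sum_(0 <= i < k) f i <= l)%Re.
Proof.
have growing : Un_growing (sum_f_R0 f) by move=> k' /=; have := f_ge0 k'.+1; lra.
have le_l k' := growing_ineq _ _ growing f_sum k'.
case: k => [|k]; last by rewrite -sum_f_R0E.
by rewrite big_geq //; have := le_l 0%N; have := f_ge0 0%N; rewrite /=; rnorm; lra.
Qed.

Lemma infinite_sum_term_le k : (f k <= l)%Re.
Proof.
apply: Rle_trans (infinite_sum_partial_le k.+1); rewrite big_nat_recr //= addrC.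
by apply: leR_addr; apply: sumR_ge0 => i _.
Qed.

End Series.

Definition minor_sq_sum (K : comPzRingType) (m n : nat) (M : 'M[K]_(m, n)) : K :=
  \sum_(f : {ffun 'I_n -> 'I_m}) \det (rowsub f M) ^+ 2.

Lemma det_trmx_mul_expand (K : comPzRingType) (m n : nat) (M : 'M[K]_(m, n)) :
  \det (M^T *m M) =
    \sum_(f : {ffun 'I_n -> 'I_m}) (\prod_i M (f i) i) * \det (rowsub f M).
Proof.
rewrite /determinant.
under eq_bigr => s _.
  under eq_bigr => i _ do rewrite !mxE.
  under eq_bigr => i _ do under eq_bigr => k _ do rewrite !mxE.
  rewrite bigA_distr_bigA mulr_sumr.
  under eq_bigr => f _ do rewrite big_split /=.
  over.
rewrite exchange_big /=; apply: eq_bigr => f _.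
rewrite mulr_sumr; apply: eq_bigr => s _.
rewrite mulrCA; congr (_ * (_ * _)).
by apply: eq_bigr => i _; rewrite mxE.
Qed.

(* The Cauchy-Binet formula for a Gram determinant, summed over all maps
   'I_n -> 'I_m rather than over increasing ones: each n-subset of rows is
   counted n`! times and non-injective maps contribute 0. *)
Lemma det_gram_minor_sq_sum (K : comPzRingType) (m n : nat) (M : 'M[K]_(m, n)) :
  \det (M^T *m M) *+ n`! = minor_sq_sum M.
Proof.
have sq_expand (f : {ffun 'I_n -> 'I_m}) : \det (rowsub f M) ^+ 2 =
    \sum_(s : 'S_n) (-1) ^+ s * (\det (rowsub f M) * \prod_i M (f i) (s i)).
  rewrite expr2 {2}/determinant mulr_sumr; apply: eq_bigr => s _.
  by rewrite mulrCA; congr (_ * (_ * _)); apply: eq_bigr => i _; rewrite mxE.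
rewrite /minor_sq_sum; under eq_bigr => f _ do rewrite sq_expand.
rewrite exchange_big /= -(card_Sn n) -sumr_const; apply: eq_bigr => s _.
have comp_inj : injective (fun h : {ffun 'I_n -> 'I_m} => [ffun i => h (s i)]).
  move=> h1 h2 /ffunP eq_h; apply/ffunP => j.
  by have := eq_h (s^-1 j)%g; rewrite !ffunE permKV.
rewrite (reindex_inj comp_inj) /= det_trmx_mul_expand; apply: eq_bigr => h _.
have -> : rowsub [ffun i => h (s i)] M = row_perm s (rowsub h M).
  by apply/matrixP => i j; rewrite !mxE ffunE.
rewrite row_permE det_mulmx det_perm.
have -> : \prod_i M ([ffun i0 => h (s i0)] i) (s i) = \prod_i M (h i) i.
  rewrite [RHS](reindex_inj (@perm_inj _ s)) /=.
  by apply: eq_bigr => i _; rewrite ffunE.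
by rewrite mulrA mulrA -expr2 sqrr_sign mul1r mulrC.
Qed.

Lemma minor_sq_sum_ge0 (m n : nat) (M : 'M[R]_(m, n)) : (0 <= minor_sq_sum M)%Re.
Proof. by apply: sumR_ge0 => f _; exact: sqrR_ge0. Qed.

(* Adding t times row q to row p changes each minor [rowsub f M] by t times
   the minor in which the row index p is redirected to q (non-injective f give
   vanishing minors and are sent to 0); the redirected minors are themselves
   minors of M, met at most once each. *)
Section RowAdd.
Variables (m n : nat) (M M' : 'M[R]_(m, n)) (p q : 'I_m) (t : R).
Local Notation rowmap := {ffun 'I_n -> 'I_m}.

Hypothesis neq_pq : p != q.
Hypothesis M'_other : forall r c, r != p -> M' r c = M r c.
Hypothesis M'_p : forall c, M' p c = M p c + t * M q c.

Let redirect_at (f : rowmap) r : rowmap :=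
  [ffun x => if x == r then q else f x].

Let redirect (f : rowmap) :=
  if [pick r | f r == p] is Some r then redirect_at f r else f.

Let redirected_minor (f : rowmap) :=
  if injectiveb f then
    (if [pick r | f r == p] is Some r then \det (rowsub (redirect_at f r) M)
     else 0)
  else 0.

Let hits_p_misses_q : {set rowmap} :=
  [set f : rowmap | [exists r, f r == p] && (q \notin codom f)].

Lemma det_rowsub_row_add (f : rowmap) :
  \det (rowsub f M') = \det (rowsub f M) + t * redirected_minor f.
Proof.
rewrite /redirected_minor; case: (boolP (injectiveb f)); last first.
  move=> /injectivePn [x [y nxy fxy]].
  rewrite mulr0 addr0 (determinant_alternate nxy); last by move=> c; rewrite !mxE fxy.
  by rewrite (determinant_alternate nxy) // => c; rewrite !mxE fxy.
move=> /injectiveP f_inj; case: pickP => [r /eqP fr | no_p]; last first.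
  rewrite mulr0 addr0; congr (\det _).
  by apply/matrixP => x c; rewrite !mxE M'_other // no_p.
have f_other x : f (lift r x) != p.
  by rewrite -fr (inj_eq f_inj) eq_sym neq_lift.
rewrite -[X in X + _]mul1r.
apply: (determinant_multilinear (b := 1) (c := t) (i0 := r)).
- by apply/rowP => c; rewrite !mxE !ffunE eqxx fr M'_p mul1r.
- by apply/matrixP => x c; rewrite !mxE M'_other.
- apply/matrixP => x c; rewrite !mxE !ffunE eq_sym (negbTE (neq_lift r x)).
  by rewrite M'_other.
Qed.

Lemma redirected_minor_sq_le (f : rowmap) :
  (redirected_minor f ^+ 2 <=
     if f \in hits_p_misses_q then \det (rowsub (redirect f) M) ^+ 2 else 0)%Re.
Proof.
rewrite /redirected_minor /redirect; case: pickP => [r /eqP fr | no_p]; last first.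
  by rewrite if_same expr2 mulr0; case: ifP => _; [exact: sqrR_ge0 | right].
case: ifP => f_inj; last first.
  by rewrite expr2 mulr0; case: ifP => _; [exact: sqrR_ge0 | right].
case: (boolP (q \in codom f)) => [/codomP [x qx] | q_notin].
  have nxr : x != r by apply/eqP => exr; move: neq_pq; rewrite -fr qx exr eqxx.
  rewrite (determinant_alternate nxr); last first.
    by move=> c; rewrite !mxE !ffunE eqxx (negbTE nxr) qx.
  by rewrite expr2 mulr0 if_same; right.
have -> : f \in hits_p_misses_q.
  by rewrite inE q_notin andbT; apply/existsP; exists r; rewrite fr.
by right.
Qed.

Lemma redirect_inj : {in hits_p_misses_q &, injective redirect}.
Proof.
move=> f1 f2; rewrite !inE => /andP [/existsP [r1 e1] nq1] /andP [/existsP [r2 e2] nq2].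
rewrite /redirect; case: pickP => [s1 es1 | /(_ r1)]; last by rewrite e1.
case: pickP => [s2 es2 | /(_ r2)]; last by rewrite e2.
move=> eq12; have at_x x := congr1 (fun g : rowmap => g x) eq12.
have es : s1 = s2.
  apply/eqP; apply: contraT => ns; move: (at_x s1).
  by rewrite /= !ffunE eqxx (negbTE ns) => h; move: nq2; rewrite h codom_f.
subst s2; apply/ffunP => x; case: (eqVneq x s1) => [-> | nx].
  by rewrite (eqP es1) (eqP es2).
by move: (at_x x); rewrite /= !ffunE (negbTE nx).
Qed.

Lemma sum_redirected_minor_sq_le :
  (\sum_(f : rowmap) redirected_minor f ^+ 2 <= minor_sq_sum M)%Re.
Proof.
apply: Rle_trans (leR_sum (fun f _ => redirected_minor_sq_le f)) _.
rewrite -big_mkcond /=.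
rewrite -(big_imset (fun g : rowmap => \det (rowsub g M) ^+ 2) redirect_inj) /=.
by apply: leR_sum_pred => g; exact: sqrR_ge0.
Qed.

Lemma minor_sq_sum_row_add :
  (minor_sq_sum M' <= (1 + Rabs t) ^ 2 * minor_sq_sum M)%Re.
Proof.
set c := (Rabs t + t * t)%Re.
have c_ge0 : (0 <= c)%Re by rewrite /c; have := Rabs_pos t; rnorm; nra.
have split_sum : \sum_(f : rowmap) ((1 + Rabs t) * \det (rowsub f M) ^+ 2
                         + c * redirected_minor f ^+ 2)
    = (1 + Rabs t) * minor_sq_sum M + c * \sum_(f : rowmap) redirected_minor f ^+ 2.
  by rewrite big_split /= -!mulr_sumr.
have le_split : (minor_sq_sum M' <= \sum_(f : rowmap)
    ((1 + Rabs t) * \det (rowsub f M) ^+ 2 + c * redirected_minor f ^+ 2))%Re.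
  apply: leR_sum => f _; rewrite det_rowsub_row_add.
  exact: sqr_add_scaled_le.
have sq_abs : ((1 + Rabs t) ^ 2 = 1 + Rabs t + (Rabs t + t * t))%Re.
  by have := Rsqr_abs t; rewrite /Rsqr => ->; Rring.
have := Rmult_le_compat_l _ _ _ c_ge0 sum_redirected_minor_sq_le.
move: le_split; rewrite split_sum sq_abs /c; rnorm; lra.
Qed.

End RowAdd.

Section UnitStack.
Variables (n : nat) (Z : 'M[R]_n).

Local Notation S := (col_mx 1%:M Z).
Local Notation rowmap := {ffun 'I_n -> 'I_(n + n)}.

Lemma trmx_mul_unit_stack : S^T *m S = 1%:M + Z^T *m Z.
Proof. by rewrite tr_col_mx mul_row_col trmx1 mul1mx. Qed.

Lemma det_unit_stack_top : \det (rowsub [ffun r => lshift n r] S) = 1.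
Proof.
have -> : rowsub [ffun r => lshift n r] S = 1%:M.
  by apply/matrixP => r c; rewrite mxE ffunE col_mxEu.
exact: det1.
Qed.

Lemma minor_sq_sum_unit_stack_ge1 : (1 <= minor_sq_sum S)%Re.
Proof.
have := leR_term_sum (fun f : rowmap => sqrR_ge0 (\det (rowsub f S)))
  [ffun r => lshift n r].
by rewrite det_unit_stack_top expr1n.
Qed.

(* Besides the identity minor, the minor that takes row i of Z in place of
   row j of the identity equals Z i j. *)
Lemma minor_sq_sum_unit_stack_ge_entry i j :
  (1 + Z i j ^+ 2 <= minor_sq_sum S)%Re.
Proof.
pose top : rowmap := [ffun r => lshift n r].
pose swap_j : rowmap :=
  [ffun r => if r == j then rshift n i else lshift n r].
have neq : swap_j != top.
  by apply/eqP => /ffunP /(_ j); rewrite !ffunE eqxx => /eqP; rewrite eq_rlshift.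
have det_swap : \det (rowsub swap_j S) = Z i j.
  rewrite (expand_det_col _ j) (bigD1 j) //= big1 ?addr0.
    rewrite mxE ffunE eqxx col_mxEd /cofactor.
    have -> : row' j (col' j (rowsub swap_j S)) = 1%:M.
      apply/matrixP => a b; rewrite [LHS]mxE [LHS]mxE mxE ffunE.
      rewrite eq_sym (negbTE (neq_lift j a)) col_mxEu !mxE.
      by rewrite (inj_eq (@lift_inj _ j)).
    by rewrite det1 mulr1 -signr_odd addnn odd_double expr0 mulr1.
  move=> r nrj; rewrite mxE ffunE (negbTE nrj) col_mxEu mxE.
  by rewrite (negbTE nrj) mul0r.
have := leR_pair_sum (fun f : rowmap => sqrR_ge0 (\det (rowsub f S))) neq.
by rewrite det_unit_stack_top det_swap expr1n.
Qed.

Lemma minor_sq_sum_unit_stack_add_delta i j t :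
  (minor_sq_sum (col_mx 1%:M (Z + t *: delta_mx i j))
     <= (1 + Rabs t) ^ 2 * minor_sq_sum S)%Re.
Proof.
apply: (@minor_sq_sum_row_add _ _ _ _ (rshift n i) (lshift n j)).
- by rewrite eq_rlshift.
- move=> r c; rewrite -(splitK r); case: (split r) => k /= nr.
    by rewrite !col_mxEu.
  rewrite !col_mxEd !mxE.
  have nki : k != i by apply: contra nr => /eqP ->.
  by rewrite (negbTE nki) /= mulr0 addr0.
- by move=> c; rewrite !col_mxEd col_mxEu !mxE eqxx /= eq_sym.
Qed.

End UnitStack.

Lemma det_unit_gram_fact (n : nat) (Z : 'M[R]_n) :
  (\det (1%:M + Z^T *m Z) * INR n`! = minor_sq_sum (col_mx 1%:M Z))%Re.
Proof. by rewrite -det_gram_minor_sq_sum trmx_mul_unit_stack natmulRE. Qed.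

Lemma INR_fact_gt0 n : (0 < INR n`!)%Re.
Proof. by apply: lt_0_INR; apply/ltP; exact: fact_gt0. Qed.

Lemma det_unit_gram_gt0 (n : nat) (Z : 'M[R]_n) :
  (0 < \det (1%:M + Z^T *m Z))%Re.
Proof.
have := det_unit_gram_fact Z; have := minor_sq_sum_unit_stack_ge1 Z.
have := INR_fact_gt0 n; nra.
Qed.

Lemma Fld_ge_entry (n : nat) (Z : 'M[R]_n) i j :
  (ln (1 + Z i j ^+ 2) - ln (INR n`!) <= Fld Z)%Re.
Proof.
have entry_gt0 : (0 < 1 + Z i j ^+ 2)%Re by have := sqrR_ge0 (Z i j); lra.
have := minor_sq_sum_unit_stack_ge_entry Z i j; rewrite -det_unit_gram_fact.
move/(ln_le entry_gt0); rewrite /Fld ln_mult; first lra.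
- exact: det_unit_gram_gt0.
- exact: INR_fact_gt0.
Qed.

Lemma Fld_add_delta (n : nat) (Z : 'M[R]_n) i j t :
  (Fld (Z + t *: delta_mx i j) <= Fld Z + 2 * Rabs t + t * t)%Re.
Proof.
set Z' := Z + t *: delta_mx i j.
have gt0 := det_unit_gram_gt0 Z; have gt0' := det_unit_gram_gt0 Z'.
have := Rabs_pos t; have := Rsqr_abs t; rewrite /Rsqr => sq_abs t_ge0.
have c_gt0 : (0 < (1 + Rabs t) ^ 2)%Re by nra.
have det_le : (\det (1%:M + Z'^T *m Z') <= (1 + Rabs t) ^ 2 * \det (1%:M + Z^T *m Z))%Re.
  apply: (Rmult_le_reg_r _ _ _ (INR_fact_gt0 n)).
  rewrite Rmult_assoc !det_unit_gram_fact.
  exact: minor_sq_sum_unit_stack_add_delta.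
rewrite /Fld; apply: Rle_trans (ln_le gt0' det_le) _.
rewrite ln_mult //.
have := exp_ineq1_le (ln ((1 + Rabs t) ^ 2)); rewrite exp_ln //; nra.
Qed.

Definition frob_dot (m n : nat) (A B : 'M[R]_(m, n)) : R := \tr (A^T *m B).

Section FrobeniusProduct.
Variables m n : nat.
Implicit Types A B C : 'M[R]_(m, n).

Lemma frob_dotE A B : frob_dot A B = \sum_i \sum_j A i j * B i j.
Proof.
rewrite /frob_dot /mxtrace exchange_big /=; apply: eq_bigr => j _.
by rewrite mxE; apply: eq_bigr => i _; rewrite mxE.
Qed.

Lemma frob_sqE A : frob_sq A = frob_dot A A.
Proof.
by rewrite frob_dotE; apply: eq_bigr => i _; apply: eq_bigr => j _; rewrite expr2.
Qed.

Lemma frob_sq_ge0 A : (0 <= frob_sq A)%Re.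
Proof. by apply: sumR_ge0 => i _; apply: sumR_ge0 => j _; exact: sqrR_ge0. Qed.

Lemma frob_sq_eq0 A : frob_sq A = 0 -> A = 0.
Proof.
move=> sq0; apply/matrixP => i j; rewrite mxE.
have entry_le : (A i j ^+ 2 <= frob_sq A)%Re.
  apply: Rle_trans (leR_term_sum _ i) => [|i'].
    exact: (leR_term_sum (fun j => sqrR_ge0 (A i j)) j).
  by apply: sumR_ge0 => j' _; exact: sqrR_ge0.
by move: entry_le; rewrite sq0; rnorm => entry_le; nra.
Qed.

Lemma frob_dotC A B : frob_dot A B = frob_dot B A.
Proof.
by rewrite !frob_dotE; apply: eq_bigr => i _; apply: eq_bigr => j _; exact: mulrC.
Qed.

Lemma frob_dotDl A B C : frob_dot (A + B) C = frob_dot A C + frob_dot B C.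
Proof. by rewrite /frob_dot linearD mulmxDl mxtraceD. Qed.

Lemma frob_dotZl a A B : frob_dot (a *: A) B = a * frob_dot A B.
Proof. by rewrite /frob_dot linearZ -scalemxAl mxtraceZ. Qed.

Lemma frob_dotNl A B : frob_dot (- A) B = - frob_dot A B.
Proof. by rewrite -scaleN1r frob_dotZl mulN1r. Qed.

Lemma frob_dotDr A B C : frob_dot A (B + C) = frob_dot A B + frob_dot A C.
Proof. by rewrite frob_dotC frob_dotDl !(frob_dotC _ A). Qed.

Lemma frob_dotZr a A B : frob_dot A (a *: B) = a * frob_dot A B.
Proof. by rewrite frob_dotC frob_dotZl frob_dotC. Qed.

Lemma frob_dotNr A B : frob_dot A (- B) = - frob_dot A B.
Proof. by rewrite frob_dotC frob_dotNl frob_dotC. Qed.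

Lemma frob_dot_delta A i j : frob_dot A (delta_mx i j) = A i j.
Proof.
rewrite frob_dotE (bigD1 i) //= (bigD1 j) //= !big1 ?addr0.
- by rewrite mxE !eqxx mulr1.
- by move=> i' ni; apply: big1 => j' _; rewrite mxE (negbTE ni) mulr0.
- by move=> j' nj; rewrite mxE eqxx (negbTE nj) mulr0.
Qed.

Lemma frob_sq_add_delta A i j t :
  frob_sq (A + t *: delta_mx i j) = frob_sq A + 2%:R * t * A i j + t * t.
Proof.
rewrite !frob_sqE frob_dotDl !frob_dotDr !frob_dotZl !frob_dotZr.
rewrite (frob_dotC _ A) !frob_dot_delta mxE !eqxx /=; Rring.
Qed.

End FrobeniusProduct.

Lemma frob_dot_mull (d m n : nat) (X : 'M[R]_(d, m)) A (B : 'M[R]_(d, n)) :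
  frob_dot (X *m A) B = frob_dot A (X^T *m B).
Proof. by rewrite /frob_dot trmx_mul mulmxA. Qed.

Lemma frob_dot_mulr (m n p : nat) (A : 'M[R]_(m, p)) B (C : 'M[R]_(n, p)) :
  frob_dot A (B *m C) = frob_dot (A *m C^T) B.
Proof. by rewrite /frob_dot mulmxA mxtrace_mulC trmx_mul trmxK mulmxA. Qed.

Lemma frob_sq_le (m n : nat) (A : 'M[R]_(m, n)) (c : R) :
  (forall i j, A i j ^+ 2 <= c)%Re -> (frob_sq A <= c * INR m * INR n)%Re.
Proof.
move=> le_c; apply: Rle_trans (leR_sum (fun i _ => leR_sum (fun j _ => le_c i j))) _.
by rewrite !sumR_const; right; ring.
Qed.

Lemma abs_entry_le_sum (m n : nat) (A : 'M[R]_(m, n)) i j :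
  (Rabs (A i j) <= \sum_i \sum_j Rabs (A i j))%Re.
Proof.
apply: Rle_trans (leR_term_sum _ i) => [|i'].
  exact: (leR_term_sum (fun j => Rabs_pos (A i j)) j).
by apply: sumR_ge0 => j' _; exact: Rabs_pos.
Qed.

Section Lagrangian.
Variables (d n : nat) (X : 'M[R]_(d, n)) (rho : R).
Implicit Types (Z W Y H : 'M[R]_n) (beta : R).

Local Notation Lag := (Lag X rho).
Local Notation Q := ((2%:R * rho) *: (X^T *m X)).

Lemma LagE beta Z W Y : Lag Z W Y beta =
  Fld Z + rho * frob_sq (X - X *m W) + beta / 2%:R * frob_sq (Z - W)
  + frob_dot Y (Z - W).
Proof. by []. Qed.

Lemma Lag_W_add beta Z W Y H :
  Lag Z (W + H) Y beta = Lag Z W Y beta + rho * frob_sq (X *m H)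
    + beta / 2%:R * frob_sq H
    - frob_dot (Q + Y + beta *: Z - (beta *: 1%:M + Q) *m W) H.
Proof.
rewrite !LagE !frob_sqE mulmxDr mulmxDl -!scalemxAl mul1mx -mulmxA !opprD !addrA.
rewrite !(frob_dotDl, frob_dotDr, frob_dotNl, frob_dotNr, frob_dotZl).
rewrite [frob_dot (X^T *m X) H]frob_dot_mull.
rewrite [frob_dot (X^T *m (X *m W)) H]frob_dot_mull trmxK.
rewrite (frob_dotC (X *m H) X) (frob_dotC (X *m H) (X *m W)).
rewrite (frob_dotC H Z) (frob_dotC H W); Rfield.
Qed.

Lemma Lag_Z_add_delta beta Z W Y i j t :
  Lag (Z + t *: delta_mx i j) W Y beta =
  Lag Z W Y beta + (Fld (Z + t *: delta_mx i j) - Fld Z)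
  + beta / 2%:R * (2%:R * t * (Z i j - W i j) + t * t) + t * Y i j.
Proof.
rewrite !LagE.
have -> : Z + t *: delta_mx i j - W = (Z - W) + t *: delta_mx i j by rewrite addrAC.
rewrite frob_sq_add_delta (frob_dotDr Y (Z - W)) frob_dotZr frob_dot_delta.
by rewrite [(Z - W) i j]mxE [(- W) i j]mxE; Rring.
Qed.

Lemma Lag_multiplier_update beta beta' Z W Y :
  Lag Z W (Y + beta *: (Z - W)) beta' =
  Lag Z W Y beta + (beta' + beta) / 2%:R * frob_sq (Z - W).
Proof.
rewrite !LagE frob_dotDl frob_dotZl -frob_sqE; Rfield.
Qed.

Hypothesis rho_gt0 : (0 < rho)%Re.

Lemma W_system_unit beta : (0 < beta)%Re -> beta *: 1%:M + Q \in unitmx.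
Proof.
move=> beta_gt0; rewrite -row_free_unit -kermx_eq0; apply/eqP/row_matrixP => r.
set A := beta *: 1%:M + Q; set u := row r (kermx A).
have uA : u *m A = 0 by rewrite -row_mul mulmx_ker row0.
have quad : frob_dot u (u *m A) =
    beta * frob_sq u + 2%:R * rho * frob_sq (u *m X^T).
  rewrite /A mulmxDr frob_dotDr -!scalemxAr mulmx1 !frob_dotZr mulmxA.
  by rewrite frob_dot_mulr !frob_sqE.
move: quad; rewrite uA /frob_dot mulmx0 mxtrace0 row0 => quad.
apply: frob_sq_eq0; have := frob_sq_ge0 u; have := frob_sq_ge0 (u *m X^T).
move: quad; rnorm; nra.
Qed.

Lemma Lag_W_min beta Z W Y : (0 < beta)%Re ->
  (beta *: 1%:M + Q) *m W = Q + Y + beta *: Z ->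
  forall W', (Lag Z W Y beta <= Lag Z W' Y beta)%Re.
Proof.
move=> beta_gt0 stationary W'.
rewrite -(subrKC W W') Lag_W_add stationary subrr /frob_dot trmx0 mul0mx mxtrace0.
rewrite oppr0 addr0 -addrA; apply: leR_addr.
apply: Rplus_le_le_0_compat; apply: Rmult_le_pos; try exact: frob_sq_ge0.
- exact: Rlt_le.
- by apply: Rlt_le; apply: Rdiv_lt_0_compat => //; rewrite twoRE; lra.
Qed.

Lemma Lag_Z_min_multiplier_bound beta (Zs W Y : 'M[R]_n) : (0 < beta)%Re ->
  (forall Z', Lag Zs W Y beta <= Lag Z' W Y beta)%Re ->
  forall i j, (Rabs (Y i j + beta * (Zs i j - W i j)) <= 2)%Re.
Proof.
move=> beta_gt0 Zs_min i j; apply: (abs_le2_of_min_at0 beta_gt0) => t.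
have := Zs_min (Zs + t *: delta_mx i j); rewrite Lag_Z_add_delta.
have := Fld_add_delta Zs i j t; rewrite twoRE.
move: (Lag _ _ _ _) (Fld _) (Fld _) => L F' F; rnorm; nra.
Qed.

Lemma Lag_ge_Fld beta (Z W Y : 'M[R]_n) : (0 < beta)%Re ->
  (forall i j, Rabs (Y i j) <= 2)%Re ->
  (Fld Z - INR n * INR n * (2 / beta) <= Lag Z W Y beta)%Re.
Proof.
move=> beta_gt0 Y_le2; set D := Z - W.
have split_sum : beta / 2%:R * frob_sq D + frob_dot Y D =
    \sum_i \sum_j (beta / 2%:R * D i j ^+ 2 + Y i j * D i j).
  rewrite frob_dotE /frob_sq mulr_sumr -big_split; apply: eq_bigr => i _.
  by rewrite mulr_sumr -big_split.
have lower : (\sum_(i < n) \sum_(j < n) (- (2 / beta))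
    <= \sum_i \sum_j (beta / 2%:R * D i j ^+ 2 + Y i j * D i j))%Re.
  apply: leR_sum => i _; apply: leR_sum => j _.
  by rewrite twoRE sqrRE; exact: quadratic_ge_min.
move: lower; rewrite -split_sum !sumR_const LagE -/D.
have := frob_sq_ge0 (X - X *m W); have := rho_gt0; rnorm; nra.
Qed.

End Lagrangian.

Section ADMM.
Variables (d n : nat) (X : 'M[R]_(d, n)) (rho : R) (beta : nat -> R).
Variables Z W Y : nat -> 'M[R]_n.
Hypothesis rho_gt0 : (0 < rho)%Re.
Hypothesis beta_gt0 : forall k, (0 < beta k)%Re.
Hypothesis Y0 : Y 0%N = 0.
Hypothesis W_step : forall k, W k.+1 =
  invmx (beta k *: 1%:M + (2%:R * rho) *: (X^T *m X))
  *m ((2%:R * rho) *: (X^T *m X) + Y k + beta k *: Z k).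
Hypothesis Z_step : forall k (Z' : 'M[R]_n),
  (Lag X rho (Z k.+1) (W k.+1) (Y k) (beta k)
   <= Lag X rho Z' (W k.+1) (Y k) (beta k))%Re.
Hypothesis Y_step : forall k, Y k.+1 = Y k + beta k *: (Z k.+1 - W k.+1).

Local Notation L k := (Lag X rho (Z k) (W k) (Y k) (beta k)).
Local Notation growth k := (beta k.+1 / (beta k * beta k) + / beta k)%Re.

Lemma admm_W_min k W' :
  (Lag X rho (Z k) (W k.+1) (Y k) (beta k) <= Lag X rho (Z k) W' (Y k) (beta k))%Re.
Proof.
apply: Lag_W_min => //; rewrite W_step mulKVmx //.
exact: W_system_unit.
Qed.

Lemma admm_multiplier_bounded k i j : (Rabs (Y k i j) <= 2)%Re.
Proof.
case: k => [|k]; first by rewrite Y0 mxE Rabs_R0; lra.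
rewrite Y_step !mxE; exact: Lag_Z_min_multiplier_bound.
Qed.

Lemma admm_residual_bounded k i j :
  (Rabs (Z k.+1 i j - W k.+1 i j)%R <= 4 / beta k)%Re.
Proof.
have diff : Y k.+1 - Y k = beta k *: (Z k.+1 - W k.+1).
  by rewrite Y_step addrC addKr.
move/matrixP/(_ i j): diff; rewrite !mxE => diff.
have scaled : (Rabs (beta k * (Z k.+1 i j - W k.+1 i j))%R <= 4)%Re.
  rewrite -diff; apply: Rle_trans (Rabs_triang _ _) _; rewrite Rabs_Ropp.
  apply: Rle_trans (Rplus_le_compat _ _ _ _ (admm_multiplier_bounded k.+1 i j)
    (admm_multiplier_bounded k i j)) _.
  lra.
move: scaled; rewrite Rabs_mult Rabs_right; last exact: Rgt_ge.
move=> scaled; apply: (Rmult_le_reg_l (beta k)) => //.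
by rewrite /Rdiv -Rmult_assoc Rinv_r_simpl_m //; exact: Rgt_not_eq.
Qed.

Lemma admm_residual_frob k :
  (frob_sq (Z k.+1 - W k.+1) <= 4 / beta k * (4 / beta k) * INR n * INR n)%Re.
Proof.
apply: frob_sq_le => i j; rewrite !mxE sqrRE.
move: (admm_residual_bounded k i j) (Rabs_pos (Z k.+1 i j - W k.+1 i j)%R).
move: (Z k.+1 i j - W k.+1 i j)%R => x; have := pow2_abs x; nra.
Qed.

Lemma admm_Lag_step k :
  (L k.+1 <= L k + 8 * INR n * INR n * growth k)%Re.
Proof.
have beta_k := beta_gt0 k; have beta_k1 := beta_gt0 k.+1.
rewrite Y_step Lag_multiplier_update; apply: Rplus_le_compat.
  exact: Rle_trans (Z_step k (Z k)) (admm_W_min k (W k)).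
apply: Rle_trans (Rmult_le_compat_l _ _ _ _ (admm_residual_frob k)) _; rnorm.
  by apply: Rlt_le; apply: Rdiv_lt_0_compat; lra.
by right; Rfield; lra.
Qed.

Lemma admm_Lag_le k :
  (L k <= L 0%N + 8 * INR n * INR n * \sum_(0 <= i < k) growth i)%Re.
Proof.
have nn_ge0 : (0 <= 8 * INR n * INR n)%Re by have := pos_INR n; nra.
elim: k => [|k IH]; first by rewrite big_geq //; rnorm; lra.
apply: Rle_trans (admm_Lag_step k) _; rewrite big_nat_recr //=.
apply: Rle_trans (Rplus_le_compat_r _ _ _ IH) _.
by rewrite Rplus_assoc -Rmult_plus_distr_l; right.
Qed.

Hypothesis sum_ratio :
  exists l, infinite_sum (fun k => Rdiv (beta k.+1) (Rmult (beta k) (beta k))) l.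
Hypothesis sum_inv : exists l, infinite_sum (fun k => Rinv (beta k)) l.

Lemma admm_Fld_bounded : exists K, forall k, (Fld (Z k) <= K)%Re.
Proof.
case: sum_ratio => l1 sum1; case: sum_inv => l2 sum2.
have ratio_ge0 k : (0 <= beta k.+1 / (beta k * beta k))%Re.
  by have := beta_gt0 k; have := beta_gt0 k.+1; left; apply: Rdiv_lt_0_compat; nra.
have inv_ge0 k : (0 <= / beta k)%Re by left; apply: Rinv_0_lt_compat.
have nn_ge0 : (0 <= INR n * INR n)%Re by have := pos_INR n; nra.
exists (L 0%N + 8 * INR n * INR n * (l1 + l2) + INR n * INR n * (2 * l2))%Re => k.
have sum_le : (\sum_(0 <= i < k) growth i <= l1 + l2)%Re.
  rewrite big_split; apply: Rplus_le_compat.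
    exact: infinite_sum_partial_le ratio_ge0 sum1 k.
  exact: infinite_sum_partial_le inv_ge0 sum2 k.
have inv_le := infinite_sum_term_le inv_ge0 sum2 k.
have := @Lag_ge_Fld _ _ X rho rho_gt0 _ (Z k) (W k) (Y k) (beta_gt0 k)
  (admm_multiplier_bounded k).
move: sum_le (admm_Lag_le k); move: (\sum_(0 <= i < k) growth i) => S.
rnorm; nra.
Qed.

Lemma admm_Z_bounded : exists B, forall k i j, (Rabs (Z k i j) <= B)%Re.
Proof.
case: admm_Fld_bounded => K Fld_le.
exists (exp (K + ln (INR n`!))) => k i j.
have entry_gt0 : (0 < 1 + Z k i j ^+ 2)%Re by have := sqrR_ge0 (Z k i j); lra.
have abs_le : (Rabs (Z k i j) <= 1 + Z k i j ^+ 2)%Re.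
  by rewrite sqrRE; case: (Rle_or_lt 0 (Z k i j)) => z0;
    [rewrite Rabs_right | rewrite Rabs_left]; nra.
apply: Rle_trans abs_le _; rewrite -(exp_ln _ entry_gt0); apply: exp_le.
by have := Fld_ge_entry (Z k) i j; have := Fld_le k; lra.
Qed.

End ADMM.

Unset Implicit Arguments.

Theorem lemma2 (d n : nat) (X : 'M[R]_(d, n)) (rho : R) (beta : nat -> R)
  (Z W Y : nat -> 'M[R]_n)
  (hrho : Rlt R0 rho)
  (hbeta : forall k, Rlt R0 (beta k))
  (hsum1 : exists l, infinite_sum
             (fun k => Rdiv (beta k.+1) (Rmult (beta k) (beta k))) l)
  (hsum2 : exists l, infinite_sum (fun k => Rinv (beta k)) l)
  (hY0 : Y 0%N = 0)
  (hW : forall k, W k.+1 =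
          invmx (beta k *: 1%:M + (2%:R * rho) *: (X^T *m X))
          *m ((2%:R * rho) *: (X^T *m X) + Y k + beta k *: Z k))
  (hZ : forall k (Z' : 'M[R]_n),
          Rle (Lag X rho (Z k.+1) (W k.+1) (Y k) (beta k))
              (Lag X rho Z' (W k.+1) (Y k) (beta k)))
  (hYs : forall k, Y k.+1 = Y k + beta k *: (Z k.+1 - W k.+1)) :
  exists M : R, forall k (i j : 'I_n),
    Rle (Rabs (W k i j)) M /\ Rle (Rabs (Z k i j)) M.
Proof.
have [B Z_le] := admm_Z_bounded hrho hbeta hY0 hW hZ hYs hsum1 hsum2.
have [l2 sum_inv] := hsum2.
have inv_le k : (/ beta k <= l2)%Re.
  by apply: (infinite_sum_term_le _ sum_inv) => k'; left; apply: Rinv_0_lt_compat.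
have l2_ge0 : (0 <= l2)%Re.
  by apply: Rle_trans (inv_le 0%N); left; apply: Rinv_0_lt_compat.
set S0 := (\sum_i \sum_j Rabs (W 0%N i j))%Re.
have S0_ge0 : (0 <= S0)%Re.
  by apply: sumR_ge0 => i _; apply: sumR_ge0 => j _; exact: Rabs_pos.
exists (B + 4 * l2 + S0)%Re => k i j.
have B_ge0 : (0 <= B)%Re by apply: Rle_trans (Z_le k i j); exact: Rabs_pos.
split; last by have := Z_le k i j; lra.
case: k => [|k]; first by have := abs_entry_le_sum (W 0%N) i j; rewrite -/S0; lra.
rewrite -[W k.+1 i j](subKr (Z k.+1 i j)).
apply: Rle_trans (Rabs_triang _ _) _; rewrite Rabs_Ropp.
apply: Rle_trans (Rplus_le_compat _ _ _ _ (Z_le k.+1 i j)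
  (admm_residual_bounded hbeta hY0 hZ hYs k i j)) _.
by have := inv_le k; rewrite /Rdiv; lra.
Qed.
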